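(* Let $G$ be a finite group, $\Theta=\sum_{H\le G}n_HH$ a $G$-Brauer relation, and $M$ a finite $\mathbb{Z}[G]$-module. Then \[\frac{\mathcal C_\Theta(M)}{\mathcal C_\Theta(M^\vee)}=\left(\frac{\hat h^{-1}(\Theta,M)}{\hat h^0(\Theta,M)}\right)^2.\]
   Context: Let $G$ be a finite group. A $G$-Brauer relation is a formal sum $\Theta=\sum_{H\le G}n_HH$ over subgroups $H\le G$, $n_H\in\mathbb{Z}$, such that $\bigoplus_{n_H>0}\mathbb{Q}[G/H]^{n_H}\cong\bigoplus_{n_H<0}\mathbb{Q}[G/H]^{-n_H}$ as $\mathbb{Q}[G]$-modules. For a finitely generated $\mathbb{Z}[G]$-module $M$, write $M_{\mathrm{tors}}$ for its $\mathbb{Z}$-torsion subgroup and $M_{\mathrm{tf}}=M/M_{\mathrm{tors}}$. The regulator constant is \[\mathcal C_\Theta(M)=\prod_{H\le G}\Bigl(|M_{\mathrm{tors}}^H|^{-2}\det\bigl(\tfrac{1}{|H|}\langle\cdot,\cdot\rangle|_{(M^H)_{\mathrm{tf}}}\bigr)\Bigr)^{n_H}\in\mathbb{Q}^\times,\] where $\langle\cdot,\cdot\rangle:M\times M\to\mathscr L$ is any $G$-invariant $\mathbb{Z}$-bilinear pairing into a field $\mathscr L\supseteq\mathbb{Q}$ that is non-degenerate on $M_{\mathrm{tf}}$, and the determinant is computed on a $\mathbb{Z}$-basis of $(M^H)_{\mathrm{tf}}$ (the value is independent of the choice of pairing and is positive; for finite $M$ it equals $\prod_H|M^H|^{-2n_H}$).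 For $i\in\mathbb{Z}$ and $H\le G$, $\hat H^i(H,M)$ denotes Tate cohomology, $\hat h^i(H,M)=|\hat H^i(H,M)|$, and $\hat h^i(\Theta,M)=\prod_{H\le G}\hat h^i(H,M)^{n_H}$. For finite $M$, $M^\vee=\mathrm{Hom}(M,\mathbb{Q}/\mathbb{Z})$ with $G$-action $(g\psi)(m)=\psi(g^{-1}m)$. *)

From HB Require Import structures.
From mathcomp Require Import all_boot all_order all_algebra all_fingroup.
Set Implicit Arguments.
Unset Strict Implicit.
Unset Printing Implicit Defensive.
Import GRing.Theory Num.Theory.

Local Open Scope ring_scope.

Section BrauerDefs.

Variable gT : finGroupType.

(* A formal sum Theta = sum_{H <= G} n_H H is given by a coefficient   *)
(* function n : {group gT} -> int; only subgroups H \subset G count.   *)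

Definition brauer_bound (n : {group gT} -> int) : nat :=
  (\max_(H : {group gT}) absz (n H)).+1.

(* The G-set  X_s = disjoint union over H <= G with sign(n_H) = s of    *)
(* |n_H| copies of G/H (left cosets gH).  An element is a triple        *)
(* (H, k, C) with k < |n_H| the copy index and C a left coset of H in G.*)
Definition in_brauer_gset (G : {group gT}) (n : {group gT} -> int) (pos : bool)
    (x : {group gT} * 'I_(brauer_bound n) * {set gT}) : bool :=
  let: (H, k, C) := x in
  [&& H \subset G, (if pos then (0 < n H)%R else (n H < 0)%R),
      (k < absz (n H))%N & C \in lcosets H G].

Definition brauer_gset (G : {group gT}) (n : {group gT} -> int) (pos : bool) :=
  {x : {group gT} * 'I_(brauer_bound n) * {set gT} | @in_brauer_gset G n pos x}.

Definition brauer_act (n : {group gT} -> int) (g : gT)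
    (x : {group gT} * 'I_(brauer_bound n) * {set gT}) :
    {group gT} * 'I_(brauer_bound n) * {set gT} :=
  let: (H, k, C) := x in (H, k, (g *: C)%g).

(* Q[X_+] ~= Q[X_-] as Q[G]-modules: a Q-linear map Q[X_+] -> Q[X_-],   *)
(* given on the permutation bases by the matrix A (x |-> sum_y A x y y),*)
(* which is G-equivariant and has a two-sided inverse B.               *)
Definition is_brauer_relation (G : {group gT}) (n : {group gT} -> int) : Prop :=
  exists (A : brauer_gset G n true -> brauer_gset G n false -> rat)
         (B : brauer_gset G n false -> brauer_gset G n true -> rat),
    [/\ (forall x x' : brauer_gset G n true,
           \sum_(y : brauer_gset G n false) A x y * B y x' = (x == x')%:R),
        (forall y y' : brauer_gset G n false,
           \sum_(x : brauer_gset G n true) B y x * A x y' = (y == y')%:R) &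
        (forall g, g \in G ->
         forall (x x' : brauer_gset G n true) (y y' : brauer_gset G n false),
           val x' = brauer_act g (val x) -> val y' = brauer_act g (val y) ->
           A x' y' = A x y)].

Definition is_ZG_module (G : {group gT}) (M : finZmodType) (rho : gT -> M -> M)
    : Prop :=
  [/\ (forall g, g \in G -> forall x y : M, rho g (x + y) = rho g x + rho g y),
      (forall x : M, rho 1%g x = x) &
      (forall g h, g \in G -> h \in G -> forall x : M,
          rho (g * h)%g x = rho g (rho h x))].

Variables (M : finZmodType) (rho : gT -> M -> M).

Definition fixM (H : {set gT}) : {set M} :=
  [set m : M | [forall h in H, rho h m == m]].

Definition normimg (H : {set gT}) : {set M} :=
  [set (\sum_(h in H) rho h m)%R | m : M].

Definition normker (H : {set gT}) : {set M} :=
  [set m : M | (\sum_(h in H) rho h m == 0)%R].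

Definition augM (H : {set gT}) : {set M} :=
  <<[set (rho h m - m)%R | h in H, m in [set: M]]>>%g.

Definition tateH0 (H : {set gT}) := (fixM H / normimg H)%g.
Definition tateHm1 (H : {set gT}) := (normker H / augM H)%g.
Definition hhat0 (H : {set gT}) : nat := #|tateH0 H|.
Definition hhatm1 (H : {set gT}) : nat := #|tateHm1 H|.

Definition hhat0_rel (G : {group gT}) (n : {group gT} -> int) : rat :=
  \prod_(H : {group gT} | H \subset G) ((hhat0 H)%:R ^ n H).
Definition hhatm1_rel (G : {group gT}) (n : {group gT} -> int) : rat :=
  \prod_(H : {group gT} | H \subset G) ((hhatm1 H)%:R ^ n H).

(* Regulator constant of a FINITE module: M_tors = M, M_tf = 0, the     *)
(* determinant on the zero lattice is 1, so the factor for H is         *)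
(* |M^H|^{-2}.                                                         *)
Definition regconst_fin (G : {group gT}) (n : {group gT} -> int) : rat :=
  \prod_(H : {group gT} | H \subset G) (((#|fixM H|%:R)^-1 ^+ 2) ^ n H).

(* Pontryagin dual M^v = Hom(M, Q/Z).  Since #|M| * m = 0 for m in M,  *)
(* every homomorphism M -> Q/Z takes values in (1/N)Z/Z, N = #|M|,     *)
(* which we model as Z/NZ = 'I_N (k <-> k/N).                          *)

Definition QZN := 'I_(#|M|.-1.+1).

Definition is_dual_hom (f : {ffun M -> QZN}) : bool :=
  [forall x : M, forall y : M, f (x + y) == (f x + f y)%R].

(* (g psi)(m) = psi(g^{-1} m); invariants of H in M^v *)
Definition dual_fix (H : {set gT}) : {set {ffun M -> QZN}} :=
  [set f | is_dual_hom f && [forall h in H, forall m : M, f (rho h^-1 m) == f m]].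

Definition regconst_dual (G : {group gT}) (n : {group gT} -> int) : rat :=
  \prod_(H : {group gT} | H \subset G) (((#|dual_fix H|%:R)^-1 ^+ 2) ^ n H).

End BrauerDefs.

(* For each subgroup [H], the norm map [N_H : M -> M^H] kills [I_H M] and has image
   [N_H M], so the exact sequence [0 -> Ĥ^{-1}(H,M) -> M_H -> M^H -> Ĥ^0(H,M) -> 0]
   gives [|M_H| ĥ^0 = ĥ^{-1} |M^H|]; and [(M^v)^H = Hom(M_H, Q/Z)] has order [|M_H|].  The count [|Hom(A, Z/N)| = |A|] for a
   finite abelian [A] of exponent dividing [N] extends homomorphisms one cyclic
   generator at a time. *)

From HB Require Import structures.
From mathcomp Require Import all_boot all_order all_algebra all_fingroup.
From mathcomp Require Import cyclic zify ring.
Import GRing.Theory Num.Theory FinRing.Theory.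
Set Implicit Arguments.
Unset Strict Implicit.
Unset Printing Implicit Defensive.
Local Open Scope ring_scope.

Section ZmodGroups.
Variables (M : finZmodType) (G : {group M}).

Lemma zgroup0 : (0 : M) \in G. Proof. exact: group1. Qed.

Lemma zgroupD x y : x \in G -> y \in G -> x + y \in G.
Proof. exact: groupM. Qed.

Lemma zgroupN x : x \in G -> - x \in G.
Proof. exact: groupVr. Qed.

Lemma zgroupB x y : x \in G -> y \in G -> x - y \in G.
Proof. by move=> Gx Gy; rewrite zgroupD ?zgroupN. Qed.

Lemma zgroupMn x m : x \in G -> x *+ m \in G.
Proof. by move=> Gx; rewrite -zmodXgE groupX. Qed.

Lemma zgroupDl x y : x \in G -> (x + y \in G) = (y \in G).
Proof.
move=> Gx; apply/idP/idP => [Gxy|]; last exact: zgroupD.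
by rewrite -(addKr x y) zgroupD ?zgroupN.
Qed.

End ZmodGroups.

Lemma card_finZmod_gt0 (M : finZmodType) : (0 < #|M|)%N.
Proof. by apply/card_gt0P; exists 0. Qed.

Lemma mulrn_card (M : finZmodType) (a : M) : a *+ #|M| = 0.
Proof. by rewrite -zmodXgE -cardsT expg_cardG ?inE. Qed.

Section MorphOn.
Variables (M : finZmodType) (V : zmodType) (B : {group M}) (f : M -> V).
Hypothesis fD : {in B &, {morph f : x y / x + y}}.

Lemma morph_on0 : f 0 = 0.
Proof.
have := fD (zgroup0 B) (zgroup0 B); rewrite addr0 => f00.
by apply: (addrI (f 0)); rewrite addr0 -f00.
Qed.

Lemma morph_onMn x m : x \in B -> f (x *+ m) = f x *+ m.
Proof.
move=> Bx; elim: m => [|m IHm]; first by rewrite !mulr0n morph_on0.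
by rewrite !mulrS fD ?zgroupMn // IHm.
Qed.

Lemma morph_onB : {in B &, {morph f : x y / x - y}}.
Proof.
move=> x y Bx By /=; apply/eqP; rewrite eq_sym subr_eq -fD ?subrK //.
exact: zgroupB.
Qed.

End MorphOn.

(* The solutions of [k t = x] in [Z/(mk)] form a coset of [m Z/(mk)]. *)
Lemma card_mulrn_eq (n k : nat) (x : 'I_n.+1) :
  (k %| n.+1)%N -> (0 < k)%N -> (n.+1 %| x * (n.+1 %/ k))%N ->
  #|[set t : 'I_n.+1 | t *+ k == x]| = k.
Proof.
move=> k_dvd k_gt0 x_dvd; set m := (n.+1 %/ k)%N.
have Nmk : n.+1 = (m * k)%N by rewrite divnK.
have m_gt0 : (0 < m)%N by move: Nmk; case: (m).
have k_dvd_x : (k %| x)%N by move: x_dvd; rewrite {1}Nmk [(x * _)%N]mulnC dvdn_pmul2l.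
pose c := (x %/ k)%N.
have xE : (x : nat) = (c * k)%N by rewrite divnK.
have c_lt_m : (c < m)%N by have := ltn_ord x; rewrite xE Nmk ltn_pmul2r.
have solE t : (t *+ k == x) = (t %% m == c)%N.
  rewrite Zp_mulrn -val_eqE /=.
  have -> : ((t * k) %% n.+1 = (t * k) %% (m * k))%N by rewrite -Nmk.
  by rewrite -muln_modl xE eqn_pmul2r.
pose g (i : 'I_k) : 'I_n.+1 := inord (c + i * m).
have g_lt (i : 'I_k) : (c + i * m < n.+1)%N by rewrite Nmk; have := ltn_ord i; nia.
rewrite -[in RHS](card_ord k) -(card_imset _ (f := g)); last first.
  move=> i j /(congr1 val); rewrite /g /= !inordK // => /eqP.
  by rewrite eqn_add2l eqn_pmul2r // => /eqP ij; apply: val_inj.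
apply: eq_card => t; rewrite inE solE; apply/eqP/imsetP => [tE|[i _ ->]].
  have t_lt : (t %/ m < k)%N by rewrite ltn_divLR // mulnC -Nmk.
  exists (Ordinal t_lt) => //; apply: val_inj; rewrite /g /= inordK.
    by rewrite -tE [RHS]addnC -divn_eq.
  by rewrite -tE [X in (X < _)%N]addnC -divn_eq.
by rewrite /g inordK // addnC modnMDl modn_small.
Qed.

Section DualHoms.
Variable M : finZmodType.
Local Notation Z := (QZN M).
Local Notation N := #|M|.-1.+1.

(* [homs_quo I B] encodes [Hom(B/I, Z/N)]: maps additive on [B], vanishing on [I]
   and zero off [B]. *)
Definition homs_quo (I B : {set M}) : {set {ffun M -> Z}} :=
  [set f : {ffun M -> Z} | [forall x in B, forall y in B, f (x + y) == f x + f y]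
        && [forall x in I, f x == 0] && [forall x in ~: B, f x == 0]].

Lemma homs_quoP (I B : {set M}) (f : {ffun M -> Z}) :
  reflect [/\ {in B &, {morph f : x y / x + y}},
              {in I, forall x, f x = 0} & forall x, x \notin B -> f x = 0]
          (f \in homs_quo I B).
Proof.
rewrite inE; apply: (iffP idP).
  case/andP=> /andP[/forall_inP fD /forall_inP fI] /forall_inP fB; split.
  - by move=> x y Bx By; apply/eqP; apply: (forall_inP (fD x Bx)).
  - by move=> x Ix; apply/eqP; apply: fI.
  - by move=> x Bx; apply/eqP; apply: fB; rewrite inE.
case=> fD fI fB; rewrite -!andbA; apply/and3P; split.
- by apply/forall_inP => x Bx; apply/forall_inP => y By; rewrite fD.
- by apply/forall_inP => x Ix; rewrite fI.
- by apply/forall_inP => x; rewrite inE => Bx; rewrite fB.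
Qed.

Lemma card_ZN : N = #|M|.
Proof. by rewrite prednK ?card_finZmod_gt0. Qed.

Section JoinCycle.
Variables (I C : {group M}) (a : M).
Hypothesis sIC : I \subset C.

Let B := (C <*> <[a]>)%G.

Lemma join_cycleP x :
  reflect (exists2 c, c \in C & exists m, x = c + a *+ m) (x \in B).
Proof.
have -> : (B : {set M}) = (C * <[a]>)%g.
  rewrite /= comm_joingE //; apply: centC.
  by apply/centsP => u _ v _; apply: zmod_mulgC.
apply: (iffP mulsgP) => [[c z Cc /cycleP[m ->] ->]|[c Cc [m ->]]].
  by exists c => //; exists m.
by exists c (a ^+ m)%g => //; apply: mem_cycle.
Qed.

Lemma join_cycle_id : a \in B.
Proof. exact: subsetP (joing_subr _ _) _ (cycle_id a). Qed.

Lemma exists_mulrn_mem : exists j, (0 < j)%N && (a *+ j \in C).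
Proof. by exists #|M|; rewrite card_finZmod_gt0 mulrn_card zgroup0. Qed.

(* [k] is the order of [a] modulo [C], so that [B = C + {0, a, ..., (k-1) a}]. *)
Let k := ex_minn exists_mulrn_mem.

Lemma k_gt0 : (0 < k)%N.
Proof. by rewrite /k; case: ex_minnP => j /andP[]. Qed.

Lemma mulrn_k_mem : a *+ k \in C.
Proof. by rewrite /k; case: ex_minnP => j /andP[]. Qed.

Lemma k_min j : (0 < j)%N -> a *+ j \in C -> (k <= j)%N.
Proof. by rewrite /k; case: ex_minnP => i _ i_min j_gt0 Cj; apply: i_min; rewrite j_gt0. Qed.

Lemma mulrn_k_mulrn_mem m : a *+ k *+ m \in C.
Proof. exact/zgroupMn/mulrn_k_mem. Qed.

Lemma mulrn_divn_modn m : a *+ m = a *+ k *+ (m %/ k) + a *+ (m %% k).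
Proof. by rewrite -mulrnA -mulrnDr mulnC -divn_eq. Qed.

Lemma mulrn_mod_inj i j :
  (i < k)%N -> (j < k)%N -> a *+ i - a *+ j \in C -> i = j.
Proof.
wlog le_ij : i j / (i <= j)%N => [W i_lt j_lt Cij|_ j_lt Cij].
  case: (leqP i j) => [|/ltnW] le; first exact: W.
  by symmetry; apply: W => //; rewrite -opprB zgroupN.
apply/eqP; rewrite eqn_leq le_ij leqNgt; apply/negP => lt_ij.
have Cji : a *+ (j - i) \in C by rewrite mulrnBr // -opprB zgroupN.
have := k_min _ Cji; rewrite subn_gt0 lt_ij => /(_ isT).
by rewrite leqNgt ltn_subLR ?ltn_addl // ltnW.
Qed.

Lemma card_join_cycle : #|B| = (#|C| * k)%N.
Proof.
pose F (p : M * 'I_k) := p.1 + a *+ p.2.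
have -> : (B : {set M}) = F @: setX C [set: 'I_k].
  apply/setP => x; apply/join_cycleP/imsetP => [[c Cc [m ->]]|].
    exists (c + a *+ k *+ (m %/ k), Ordinal (ltn_pmod m k_gt0)).
      by rewrite !inE andbT /= zgroupD ?mulrn_k_mulrn_mem.
    by rewrite /F /= (mulrn_divn_modn m) addrA.
  by case=> [[c j]]; rewrite inE /= => /andP[Cc _] ->; exists c => //; exists j.
rewrite card_in_imset ?cardsX ?cardsT ?card_ord //.
move=> [c1 j1] [c2 j2]; rewrite !inE /= => /andP[Cc1 _] /andP[Cc2 _].
rewrite /F /= => Fe.
have j12 : j1 = j2.
  apply/val_inj/mulrn_mod_inj; rewrite ?ltn_ord //.
  have -> : a *+ j1 - a *+ j2 = c2 - c1.
    by apply: (addrI c1); rewrite addrA Fe addrK addrC subrK.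
  exact: zgroupB.
by rewrite j12 in Fe *; rewrite (addIr _ Fe).
Qed.

Lemma k_dvdN : (k %| N)%N.
Proof.
have aN : a *+ N = 0 by rewrite card_ZN mulrn_card.
rewrite /dvdn; apply/eqP; set r := (_ %% k)%N.
have Cr : a *+ r \in C.
  have -> : a *+ r = - (a *+ k *+ (N %/ k)).
    by apply/eqP; rewrite -addr_eq0 addrC -mulrn_divn_modn aN.
  by rewrite zgroupN ?mulrn_k_mulrn_mem.
case: (posnP r) => // r_gt0; have := k_min r_gt0 Cr.
by rewrite leqNgt ltn_pmod ?k_gt0.
Qed.

Lemma card_extension_values f : f \in homs_quo I C ->
  #|[set t : Z | t *+ k == f (a *+ k)]| = k.
Proof.
case/homs_quoP=> fD _ _; apply: card_mulrn_eq; rewrite ?k_gt0 ?k_dvdN //.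
have : f (a *+ k) *+ (N %/ k) = 0.
  rewrite -(morph_onMn fD) ?mulrn_k_mem // -mulrnA mulnC divnK ?k_dvdN //.
  by rewrite card_ZN mulrn_card (morph_on0 fD).
by rewrite Zp_mulrn => /(congr1 val) /= /eqP.
Qed.

Lemma hom_extension f t : f \in homs_quo I C -> t *+ k = f (a *+ k) ->
  exists2 g, g \in homs_quo I B &
    forall c m, c \in C -> g (c + a *+ m) = f c + t *+ m.
Proof.
case/homs_quoP=> fD fI fC tk.
pose j x : nat := if [pick i : 'I_k | x - a *+ i \in C] is Some i then val i else 0%N.
pose g := [ffun x => if x \in B then f (x - a *+ j x) + t *+ j x else 0].
have gE c m : c \in C -> g (c + a *+ m) = f c + t *+ m.
  move=> Cc; rewrite ffunE.
  have -> : c + a *+ m \in B by apply/join_cycleP; exists c => //; exists m.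
  set c' := c + a *+ k *+ (m %/ k).
  have Cc' : c' \in C by rewrite zgroupD ?mulrn_k_mulrn_mem.
  have shift (i : nat) : c + a *+ m - a *+ i = c' + (a *+ (m %% k) - a *+ i).
    by rewrite {1}(mulrn_divn_modn m) !addrA.
  rewrite /j; case: pickP => [i /= Ci | none]; last first.
    by have := none (Ordinal (ltn_pmod m k_gt0)); rewrite /= (shift (m %% k)%N) subrr addr0 Cc'.
  have <- : (m %% k)%N = i.
    by apply: mulrn_mod_inj; rewrite ?ltn_pmod ?k_gt0 // -(zgroupDl _ Cc') -shift.
  rewrite shift subrr addr0 (fD _ _ Cc (mulrn_k_mulrn_mem _)) (morph_onMn fD) ?mulrn_k_mem //.
  by rewrite -tk -mulrnA -addrA -mulrnDr [(k * _)%N]mulnC -divn_eq.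
exists g => //; apply/homs_quoP; split.
- move=> x y /join_cycleP[c1 Cc1 [m1 ->]] /join_cycleP[c2 Cc2 [m2 ->]].
  by rewrite addrACA -mulrnDr !gE ?zgroupD // fD // mulrnDr addrACA.
- move=> x Ix; have Cx : x \in C by apply: (subsetP sIC).
  by have := gE x 0%N Cx; rewrite mulr0n !addr0 fI.
- by move=> x Bx; rewrite ffunE (negPf Bx).
Qed.

Let restr (g : {ffun M -> Z}) := ([ffun x => if x \in C then g x else 0], g a).

Lemma restr_inj : {in homs_quo I B &, injective restr}.
Proof.
move=> g1 g2 /homs_quoP[g1D _ g1B] /homs_quoP[g2D _ g2B] [g12C g12a].
apply/ffunP => x; case: (boolP (x \in B)) => [|Bx]; last by rewrite g1B ?g2B.
case/join_cycleP=> c Cc [m ->].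
have Bc : c \in B by apply: (subsetP (joing_subl _ _)).
rewrite g1D ?g2D ?zgroupMn ?join_cycle_id //.
rewrite (morph_onMn g1D) ?(morph_onMn g2D) ?join_cycle_id // g12a.
by have := congr1 (fun h : {ffun M -> Z} => h c) g12C; rewrite !ffunE Cc => ->.
Qed.

Lemma restr_homs_quo :
  restr @: homs_quo I B =
  [set p : {ffun M -> Z} * Z | (p.1 \in homs_quo I C) && (p.2 *+ k == p.1 (a *+ k))].
Proof.
have CB : C \subset B by apply: joing_subl.
apply/setP => -[f t]; apply/imsetP/idP => [[g /homs_quoP[gD gI gB] [-> ->]]|].
  rewrite inE /= ffunE mulrn_k_mem (morph_onMn gD) ?join_cycle_id //.
  rewrite eqxx andbT; apply/homs_quoP; split.
  - by move=> x y Cx Cy; rewrite !ffunE Cx Cy zgroupD // gD ?(subsetP CB).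
  - by move=> x Ix; rewrite ffunE (subsetP sIC) // gI.
  - by move=> x Cx; rewrite ffunE (negPf Cx).
rewrite inE /= => /andP[fC /eqP tk].
have [g Bg gE] := hom_extension fC tk.
case/homs_quoP: fC => fD _ fB; exists g => //; congr pair.
  apply/ffunP => x; rewrite ffunE; case: ifP => [Cx|Cx]; last by rewrite fB ?Cx.
  by have := gE x 0%N Cx; rewrite mulr0n !addr0.
by have := gE 0 1%N (zgroup0 C); rewrite add0r mulr1n (morph_on0 fD) add0r.
Qed.

Lemma card_homs_quo_join : #|homs_quo I B| = (#|homs_quo I C| * k)%N.
Proof.
rewrite -(card_in_imset restr_inj) restr_homs_quo -sum1_card.
rewrite (eq_bigl (fun p : {ffun M -> Z} * Z =>
           (p.1 \in homs_quo I C) && (p.2 *+ k == p.1 (a *+ k)))); last by move=> p; rewrite inE.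
rewrite -(pair_big_dep (fun f => f \in homs_quo I C)
            (fun f (t : Z) => t *+ k == f (a *+ k)) (fun _ _ => 1%N)) /=.
rewrite (eq_bigr (fun _ => k)) ?sum_nat_const // => f Cf.
by rewrite sum1dep_card card_extension_values.
Qed.

End JoinCycle.

Lemma card_homs_quo (I : {group M}) : (#|homs_quo I [set: M]| * #|I| = #|M|)%N.
Proof.
have homs_quo_I : #|homs_quo I I| = 1%N.
  rewrite -(cards1 ([ffun => 0] : {ffun M -> Z})); apply: eq_card => f.
  rewrite in_set1; apply/homs_quoP/eqP => [[_ fI fB]|->].
    by apply/ffunP => x; rewrite ffunE; case: (boolP (x \in I)) => [/fI|/fB].
  by split=> [x y _ _|x _|x _]; rewrite !ffunE ?addr0.
have [B [_ sB IH]] : exists B : {group M},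
    [/\ I \subset B, {subset enum M <= B} & (#|homs_quo I B| * #|I| = #|B|)%N].
  elim: (enum M) => [|a s [B [sIB sB IH]]].
    by exists I; split => //; rewrite homs_quo_I mul1n.
  exists (B <*> <[a]>)%G; split.
  - exact: subset_trans sIB (joing_subl _ _).
  - move=> x; rewrite inE => /predU1P[->|/sB Bx].
      exact: subsetP (joing_subr _ _) _ (cycle_id a).
    exact: subsetP (joing_subl _ _) _ Bx.
  - by rewrite card_homs_quo_join // card_join_cycle -IH mulnAC.
have BT : (B : {set M}) = [set: M] by apply/setP => x; rewrite inE sB ?mem_enum.
by rewrite BT cardsT in IH.
Qed.

End DualHoms.

Section TateCohomologyOrders.
Variables (gT : finGroupType) (M : finZmodType) (rho : gT -> M -> M) (H : {group gT}).
Hypothesis rhoD : forall h, h \in H -> {morph rho h : x y / x + y}.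
Hypothesis rhoM : forall g h, g \in H -> h \in H -> forall x, rho (g * h)%g x = rho g (rho h x).

Let rhoD_on h (Hh : h \in H) : {in [set: M]%G &, {morph rho h : x y / x + y}}.
Proof. by move=> x y _ _; apply: rhoD. Qed.

Lemma rho_sum h (I : finType) (P : pred I) (F : I -> M) : h \in H ->
  rho h (\sum_(i | P i) F i) = \sum_(i | P i) rho h (F i).
Proof.
move=> Hh; elim/big_rec2: _ => [|i y1 y2 _ <-]; first exact: morph_on0 (rhoD_on Hh).
by rewrite rhoD.
Qed.

Let norm m := \sum_(h in H) rho h m.

Lemma normD : {morph norm : x y / x + y}.
Proof. by move=> x y; rewrite /norm -big_split; apply: eq_bigr => h /rhoD->. Qed.

Lemma norm0 : norm 0 = 0.
Proof. by rewrite /norm big1 // => h Hh; apply: morph_on0 (rhoD_on Hh). Qed.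

Lemma fixM_group_set : group_set (fixM rho H).
Proof.
apply/group_setP; split.
  by rewrite inE; apply/forall_inP => h Hh; rewrite (morph_on0 (rhoD_on Hh)).
move=> x y; rewrite !inE => /forall_inP fx /forall_inP fy.
by apply/forall_inP => h Hh; rewrite [(x * y)%g]/= rhoD // (eqP (fx h Hh)) (eqP (fy h Hh)).
Qed.

Lemma normker_group_set : group_set (normker rho H).
Proof.
apply/group_setP; split; first by rewrite inE -/(norm 0) norm0.
by move=> x y; rewrite !inE -!/(norm _) [(x * y)%g]/= normD => /eqP-> /eqP->; rewrite addr0.
Qed.

Lemma normimg_group_set : group_set (normimg rho H).
Proof.
apply/group_setP; split; first by apply/imsetP; exists 0; rewrite // -/(norm 0) norm0.
move=> _ _ /imsetP[x _ ->] /imsetP[y _ ->]; apply/imsetP; exists (x + y) => //.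
exact: (esym (normD x y)).
Qed.

Canonical fixM_group := Group fixM_group_set.
Canonical normker_group := Group normker_group_set.
Canonical normimg_group := Group normimg_group_set.

Lemma normimg_sub_fixM : normimg rho H \subset fixM rho H.
Proof.
apply/subsetP => _ /imsetP[m _ ->]; rewrite inE; apply/forall_inP => g Hg.
rewrite rho_sum //; apply/eqP; rewrite [RHS](reindex_inj (mulgI g)) /=.
by apply: eq_big => [h|h Hh]; rewrite ?groupMl ?rhoM.
Qed.

(* [I_H M] is killed by the norm since [N_H (g m) = N_H m] for [g] in [H]. *)
Lemma augM_sub_normker : augM rho H \subset normker rho H.
Proof.
rewrite gen_subG; apply/subsetP => _ /imset2P[g m Hg _ ->].
rewrite inE -/(norm _) /norm.
have -> : \sum_(h in H) rho h (rho g m - m) =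
          \sum_(h in H) rho (h * g)%g m - \sum_(h in H) rho h m.
  rewrite -sumrB; apply: eq_bigr => h Hh.
  by rewrite (morph_onB (rhoD_on Hh)) ?inE // rhoM.
rewrite (reindex_inj (mulIg g^-1)%g) /=.
rewrite (eq_big (fun h => h \in H) (fun h => rho h m)) ?subrr // => h.
  by rewrite groupMr ?groupV.
by rewrite mulgKV.
Qed.

Lemma card_normker_normimg : (#|normker rho H| * #|normimg rho H| = #|M|)%N.
Proof.
pose nf : {morphism [set: M]%G >-> M} := @Morphism M M [set: M] norm (in2W normD).
have im_nf : (nf @* [set: M])%g = normimg rho H.
  by rewrite morphimEdom; apply/setP => y; apply/imsetP/imsetP; case=> m _ ->; exists m.
have ker_nf : ('ker nf)%g = normker rho H by apply/setP => x; rewrite !inE.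
have := card_morphim nf [set: M]; rewrite im_nf setIid -ker_nf => ->.
by rewrite -cardsT (Lagrange (subsetT _)).
Qed.

Lemma card_tateHm1 : (hhatm1 rho H * #|augM rho H| = #|normker rho H|)%N.
Proof.
rewrite /hhatm1 /tateHm1 card_quotient ?(sub_abelian_norm (zmod_abelian _)) ?augM_sub_normker //.
by rewrite mulnC (Lagrange augM_sub_normker).
Qed.

Lemma card_tateH0 : (hhat0 rho H * #|normimg rho H| = #|fixM rho H|)%N.
Proof.
rewrite /hhat0 /tateH0 card_quotient ?(sub_abelian_norm (zmod_abelian _)) ?normimg_sub_fixM //.
by rewrite mulnC (Lagrange normimg_sub_fixM).
Qed.

Lemma dual_fixE : dual_fix rho H = homs_quo (augM rho H) [set: M].
Proof.
apply/setP => f; rewrite [in LHS]inE; apply/andP/homs_quoP => [[fD fH]|[fD fI _]].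
  have {}fD : {in [set: M]%G &, {morph f : x y / x + y}}.
    by move=> x y _ _; apply/eqP; apply: (forallP (forallP fD x) y).
  split=> //; last by move=> x; rewrite inE.
  have ker_group : group_set [set x : M | f x == 0].
    apply/group_setP; split; first by rewrite inE (morph_on0 fD).
    by move=> x y; rewrite !inE [(x * y)%g]/= fD ?inE // => /eqP-> /eqP->; rewrite addr0.
  suff /subsetP sub : augM rho H \subset Group ker_group by move=> x /sub; rewrite inE => /eqP.
  rewrite gen_subG; apply/subsetP => _ /imset2P[g m Hg _ ->].
  rewrite inE (morph_onB fD) ?inE //.
  have := forall_inP fH g^-1%g; rewrite groupV invgK => /(_ Hg) /forallP /(_ m) /eqP ->.
  by rewrite subrr.
split; first by apply/forallP => x; apply/forallP => y; rewrite fD ?inE.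
apply/forall_inP => h Hh; apply/forallP => m.
have Im : rho h^-1%g m - m \in augM rho H.
  by apply: mem_gen; apply/imset2P; exists h^-1%g m; rewrite ?groupV ?inE.
by have := fI _ Im; rewrite (morph_onB fD) ?inE // => /eqP; rewrite subr_eq0.
Qed.

Lemma card_dual_fix_tate :
  (#|dual_fix rho H| * hhat0 rho H = hhatm1 rho H * #|fixM rho H|)%N.
Proof.
have aug_gt0 : (0 < #|augM rho H|)%N by apply/card_gt0P; exists 0; apply: group1.
have img_gt0 : (0 < #|normimg rho H|)%N by apply/card_gt0P; exists 0; apply: group1.
apply/eqP; rewrite -(@eqn_pmul2r (#|augM rho H| * #|normimg rho H|)) ?muln_gt0 ?aug_gt0 //.
rewrite mulnACA dual_fixE card_homs_quo card_tateH0.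
by rewrite mulnACA card_tateHm1 mulnCA card_normker_normimg mulnC.
Qed.

End TateCohomologyOrders.

Lemma expfz_ratio_inv_sq (F D p q : nat) (n : int) :
  (0 < F)%N -> (0 < q)%N -> (D * q = p * F)%N ->
  (F%:R^-1 ^+ 2) ^ n / (D%:R^-1 ^+ 2) ^ n = (p%:R ^ n / q%:R ^ n : rat) ^+ 2.
Proof.
move=> F_gt0 q_gt0 DqE.
have sq_expz (x : rat) : (x ^+ 2) ^ n = (x ^ n) ^+ 2 by rewrite !expr2 expfzMl.
have F_neq0 : (F%:R : rat) ^ n != 0 by rewrite expfz_neq0 // pnatr_eq0 -lt0n.
have q_neq0 : (q%:R : rat) ^ n != 0 by rewrite expfz_neq0 // pnatr_eq0 -lt0n.
have DE : (D%:R : rat) = p%:R * F%:R / q%:R.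
  by rewrite -natrM -DqE natrM mulfK // pnatr_eq0 -lt0n.
rewrite DE !sq_expz -!expfV !expfzMl -expfV [X in _ / X]exprVn invrK.
by field; rewrite F_neq0 q_neq0.
Qed.

Theorem mainTheorem6 (gT : finGroupType) (G : {group gT}) (n : {group gT} -> int)
    (M : finZmodType) (rho : gT -> M -> M) :
  is_brauer_relation G n ->
  is_ZG_module G rho ->
  regconst_fin rho G n / regconst_dual rho G n =
  (hhatm1_rel rho G n / hhat0_rel rho G n) ^+ 2.
Proof.
move=> _ [rhoD _ rhoM].
rewrite /regconst_fin /regconst_dual /hhatm1_rel /hhat0_rel -!prodfV -!big_split /= -prodrXl.
apply: eq_bigr => H sHG.
have HG h : h \in H -> h \in G by apply: (subsetP sHG).
have rhoHD h (Hh : h \in H) := rhoD h (HG h Hh).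
have rhoHM g h (Hg : g \in H) (Hh : h \in H) := rhoM g h (HG g Hg) (HG h Hh).
have fix_gt0 : (0 < #|fixM rho H|)%N.
  by apply/card_gt0P; exists 0; apply: (group1 (fixM_group rhoHD)).
have tateH0_gt0 : (0 < hhat0 rho H)%N.
  by move: fix_gt0; rewrite -(card_tateH0 rhoHD rhoHM) muln_gt0 => /andP[].
by apply: expfz_ratio_inv_sq => //; apply: card_dual_fix_tate.
Qed.
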